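(* Consider the deep linear network setting below, trained by gradient descent with Polyak's momentum with step size $\eta$ and momentum parameter $\beta$. Let $\xi_t:=\mathrm{vec}(U_t-Y)\in\mathbb{R}^{d_yn}$, let $M_{t,l}:=\sum_{s=0}^t\beta^{t-s}\frac{\partial\ell}{\partial W^{(l)}}(W_s)$, and define $$H_t:=\frac{1}{m^{L-1}d_y}\sum_{l=1}^L\Big[(W^{(l-1:1)}_tX)^\top(W^{(l-1:1)}_tX)\otimes W^{(L:l+1)}_t(W^{(L:l+1)}_t)^\top\Big]\in\mathbb{R}^{d_yn\times d_yn},$$ $$\Phi_t:=\prod_{l}(W^{(l)}_t-\eta M_{t,l})-W^{(L:1)}_t+\eta\sum_{l=1}^LW^{(L:l+1)}_tM_{t,l}W^{(l-1:1)}_t,\qquad\phi_t:=\tfrac{1}{\sqrt{m^{L-1}d_y}}\mathrm{vec}(\Phi_tX),$$ $$\psi_t:=\tfrac{1}{\sqrt{m^{L-1}d_y}}\mathrm{vec}\Big((L-1)\beta W^{(L:1)}_tX+\beta W^{(L:1)}_{t-1}X-\beta\sum_{l=1}^LW^{(L:l+1)}_tW^{(l)}_{t-1}W^{(l-1:1)}_tX\Big),\qquad \iota_t:=\eta(H_0-H_t)\xi_t,$$ where $\prod_l(W^{(l)}_t-\eta M_{t,l})$ denotes the ordered product $(W^{(L)}_t-\eta M_{t,L})\cdots(W^{(1)}_t-\eta M_{t,1})$. Then $H_t$ is positive semidefinite and for every $t\ge0$, $$\begin{bmatrix}\xi_{t+1}\\ \xi_t\end{bmatrix}=\begin{bmatrix}(1+\beta)I_{d_yn}-\eta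 H_0&-\beta I_{d_yn}\\ I_{d_yn}&0\end{bmatrix}\begin{bmatrix}\xi_t\\ \xi_{t-1}\end{bmatrix}+\begin{bmatrix}\phi_t+\psi_t+\iota_t\\0\end{bmatrix}.$$
   Context: Deep linear network: $\mathcal N_W(x)=\frac{1}{\sqrt{m^{L-1}d_y}}W^{(L)}W^{(L-1)}\cdots W^{(1)}x$ with $W^{(l)}\in\mathbb{R}^{d_l\times d_{l-1}}$, $d_0=d$, $d_L=d_y$, $d_l=m$ otherwise. $W^{(j:i)}:=W^{(j)}W^{(j-1)}\cdots W^{(i)}$ for $i\le j$ and $W^{(i-1:i)}:=I$ (identity of appropriate size). Data matrix $X=[x_1,\dots,x_n]\in\mathbb{R}^{d\times n}$, labels $Y\in\mathbb{R}^{d_y\times n}$, output $U:=\frac{1}{\sqrt{m^{L-1}d_y}}W^{(L:1)}X$, loss $\ell(W)=\frac12\|U-Y\|_F^2$. Gradient descent with Polyak's momentum: $W^{(l)}_{-1}:=W^{(l)}_0$, $W^{(l)}_{t+1}=W^{(l)}_t-\eta\frac{\partial\ell}{\partial W^{(l)}}(W_t)+\beta(W^{(l)}_t-W^{(l)}_{t-1})$ for every layer $l$ (equivalently $W^{(l)}_{t+1}=W^{(l)}_t-\eta M_{t,l}$). $U_t$ is the output at iterate $W_t$. $\mathrm{vec}$ is column-major vectorization, $\otimes$ the Kronecker product. *)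

From HB Require Import structures.
From mathcomp Require Import all_boot all_order all_algebra.
From mathcomp Require Import boolp classical_sets reals topology normedtype derive.
From mathcomp Require Import mxtens.
Set Implicit Arguments. Unset Strict Implicit. Unset Printing Implicit Defensive.
Import Order.TTheory GRing.Theory Num.Theory.
Local Open Scope ring_scope.

Definition dimf (d m dy L : nat) (l : nat) : nat :=
  if l == 0%N then d else if l == L then dy else m.

(* A family of weights: W l : d_l x d_{l-1} (only 1 <= l <= L is meaningful). *)
Definition Wts (R : realType) (d m dy L : nat) :=
  forall l : nat, 'M[R]_(dimf d m dy L l, dimf d m dy L l.-1).

Fixpoint preW (R : realType) (d m dy L : nat) (A : Wts R d m dy L) (l : nat)
  : 'M[R]_(dimf d m dy L l, d) :=
  match l with
  | 0 => 1%:M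
  | l'.+1 => A l'.+1 *m preW A l'
  end.

(* Product of layers i+1, ..., i+k : W^{(i+k : i+1)}, with the empty product = I. *)
Fixpoint midW (R : realType) (d m dy L : nat) (A : Wts R d m dy L) (i k : nat)
  : 'M[R]_(dimf d m dy L (k + i), dimf d m dy L i) :=
  match k with
  | 0 => 1%:M
  | k'.+1 => A (k' + i).+1 *m midW A i k'
  end.

(* For 0 <= l <= L (and L >= 1) the dimensions of
   midW A l (L - l) are exactly (d_y, d_l) and conform_mx is just the identity
   cast; the default 0 is only used for meaningless indices l > L. *)
Definition postW (R : realType) (d m dy L : nat) (A : Wts R d m dy L) (l : nat)
  : 'M[R]_(dy, dimf d m dy L l) :=
  conform_mx 0 (midW A l (L - l)).

Definition cnorm (R : realType) (m dy L : nat) : R :=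
  (Num.sqrt ((m ^ (L - 1) * dy)%N%:R))^-1.

Definition outU (R : realType) (d m dy n L : nat) (A : Wts R d m dy L)
  (X : 'M[R]_(d, n)) : 'M[R]_(dy, n) :=
  cnorm R m dy L *: (postW A 0 *m X).

Definition loss (R : realType) (d m dy n L : nat) (X : 'M[R]_(d, n))
  (Y : 'M[R]_(dy, n)) (A : Wts R d m dy L) : R :=
  2^-1 * \sum_(a < dy) \sum_(b < n) ((outU A X - Y) a b) ^+ 2.

Definition updW (R : realType) (d m dy L : nat) (A : Wts R d m dy L) (l : nat)
  (B : 'M[R]_(dimf d m dy L l, dimf d m dy L l.-1)) : Wts R d m dy L :=
  fun k => if l =P k is ReflectT e
           then ecast k 'M[R]_(dimf d m dy L k, dimf d m dy L k.-1) e B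
           else A k.

Definition gradW (R : realType) (d m dy n L : nat) (X : 'M[R]_(d, n))
  (Y : 'M[R]_(dy, n)) (A : Wts R d m dy L) (l : nat)
  : 'M[R]_(dimf d m dy L l, dimf d m dy L l.-1) :=
  \matrix_(i, j) @derive1 R R^o
     (fun s : R => loss X Y (updW A (\matrix_(a, b)
          if (a == i) && (b == j) then s else A l a b)))
     (A l i j).

(* Column-major vectorisation: vec A has entry A i j at index j * p + i. *)
Definition vecc (R : realType) (p q : nat) (A : 'M[R]_(p, q)) : 'cV[R]_(q * p) :=
  \col_k A (mxtens_unindex k).2 (mxtens_unindex k).1.

(* Kronecker product (library tensmx, compatible with vecc's index convention). *)
Definition kron (R : realType) (p q r s : nat) (A : 'M[R]_(p, q)) (B : 'M[R]_(r, s))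
  : 'M[R]_(p * r, q * s) := tensmx A B.

Definition psd (R : realType) (N : nat) (H : 'M[R]_N) : Prop :=
  H^T = H /\ forall v : 'cV[R]_N, 0 <= (v^T *m H *m v) 0 0.

From HB Require Import structures.
From mathcomp Require Import all_boot all_order all_algebra.
From mathcomp Require Import boolp classical_sets reals topology normedtype derive.
From mathcomp Require Import mxtens.
From mathcomp Require Import zify ring.
Set Implicit Arguments. Unset Strict Implicit. Unset Printing Implicit Defensive.
Import Order.TTheory GRing.Theory Num.Theory.
Local Open Scope ring_scope.

(* Write F(A) = W^{(L:1)} for the end-to-end product of a family of weights A.
   The proof rests on four facts, established in this order:
   1. Layer factorisation: W^{(L:l+1)} W^{(l)} W^{(l-1:1)} = F(A) for every
      layer l, and replacing one layer B changes F into W^{(L:l+1)} B W^{(l-1:1)}.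
   2. Gradient formula: since the network output is linear in each layer,
      dl/dW^{(l)} = c W^{(L:l+1)T} (U - Y) (W^{(l-1:1)}X)^T, c = 1/sqrt(m^{L-1}d_y).
   3. Kronecker calculus: vec(ABC) = (C^T (x) A) vec B; hence H_t xi_t equals
      c vec(sum_l W^{(L:l+1)} dl/dW^{(l)} W^{(l-1:1)} X), and H_t is a sum of
      Gram matrices, so it is positive semidefinite.
   4. Momentum bookkeeping: the heavy-ball recursion is W_{t+1} = W_t - eta M_t
      with eta M_t = eta grad_t + beta (W_{t-1} - W_t).
   Substituting 2-4 into the definitions of phi, psi and iota, the claimed
   recursion reduces to a linear identity between matrices (lemma
   [residual_recursion_identity]). *)

Section Layers.
Variables (R : realType) (d m dy L : nat).
Implicit Types A : Wts R d m dy L.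

Definition endW A : 'M[R]_(dy, d) := conform_mx 0 (preW A L).

Lemma preW_ext A A' k : (forall j, (0 < j <= k)%N -> A j = A' j) ->
  preW A k = preW A' k.
Proof.
elim: k => [//|k IH] eqA /=.
rewrite eqA; last lia.
by rewrite IH // => j /andP[? ?]; apply: eqA; lia.
Qed.

Lemma midW_ext A A' i k : (forall j, (i < j <= k + i)%N -> A j = A' j) ->
  midW A i k = midW A' i k.
Proof.
elim: k => [//|k IH] eqA /=.
rewrite eqA; last lia.
by rewrite IH // => j /andP[? ?]; apply: eqA; lia.
Qed.

Lemma postW_ext A A' l : (forall j, (l < j <= L)%N -> A j = A' j) ->
  postW A l = postW A' l.
Proof.
by move=> eqA; rewrite /postW (@midW_ext A A') // => j /andP[lj jL]; apply: eqA; lia.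
Qed.

Lemma endW_ext A A' : (forall j, (0 < j <= L)%N -> A j = A' j) -> endW A = endW A'.
Proof. by move=> eqA; rewrite /endW (@preW_ext A A'). Qed.

Lemma midW_preW A i k : midW A i k *m preW A i = preW A (k + i).
Proof. by elim: k => [|k IH] /=; rewrite ?mul1mx // -mulmxA IH. Qed.

Lemma conform_mulmx p p' q r (B : 'M[R]_(p', q)) (C : 'M[R]_(p, q))
    (D : 'M[R]_(q, r)) :
  conform_mx B C *m D = conform_mx (B *m D) (C *m D).
Proof.
by case: (eqVneq p p') => [e|ne]; [subst; rewrite !conform_mx_id | rewrite !nonconform_mx ?ne].
Qed.

Lemma postW_preW A l : (l <= L)%N -> postW A l *m preW A l = endW A.
Proof. by move=> lL; rewrite /postW conform_mulmx mul0mx midW_preW subnK. Qed.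

Lemma postW0 A : postW A 0 = endW A.
Proof. by rewrite -(postW_preW A (leq0n L)) mulmx1. Qed.

Lemma layer_factor A l : (1 <= l <= L)%N ->
  postW A l *m A l *m preW A l.-1 = endW A.
Proof. by case: l => // l /andP[_ lL]; rewrite -mulmxA postW_preW. Qed.

Lemma sum_layer_factor A :
  \sum_(1 <= l < L.+1) postW A l *m A l *m preW A l.-1 = L%:R *: endW A.
Proof.
rewrite (eq_big_nat _ _ (F2 := fun=> endW A)) => [|l lL]; last exact: layer_factor.
by rewrite sumr_const_nat subn1 scaler_nat.
Qed.

Lemma updW_same A l (B : 'M[R]_(dimf d m dy L l, dimf d m dy L l.-1)) :
  updW A B l = B.
Proof. by rewrite /updW; case: eqP => // e; rewrite (eq_irrelevance e erefl). Qed.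

Lemma updW_other A l (B : 'M[R]_(dimf d m dy L l, dimf d m dy L l.-1)) k :
  l != k -> updW A B k = A k.
Proof. by rewrite /updW; case: eqP. Qed.

(* Replacing layer l by B turns F into W^{(L:l+1)} B W^{(l-1:1)}: the network
   is linear in each layer separately. *)
Lemma endW_updW A l (B : 'M[R]_(dimf d m dy L l, dimf d m dy L l.-1)) :
  (1 <= l <= L)%N -> endW (updW A B) = postW A l *m B *m preW A l.-1.
Proof.
move=> lL; rewrite -(layer_factor (updW A B) lL) updW_same.
rewrite (@postW_ext (updW A B) A) ?(@preW_ext (updW A B) A) // => j /andP[? ?];
  by rewrite updW_other //; lia.
Qed.
End Layers.

Lemma deriv_half_sqr_affine (R : realFieldType) (e k x : R) :
  ((2^-1)%:P * (e%:P + k%:P * 'X) ^+ 2)^`().[x] = (e + k * x) * k.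
Proof.
rewrite expr2 !derivM !derivD !derivM !derivC !derivX.
rewrite !(hornerM, hornerD, hornerC, hornerX, horner0) !mul0r !add0r !mulr1.
have two_neq0 : (2 : R) != 0 by rewrite pnatr_eq0.
by field.
Qed.

Lemma derive1_half_sqnorm (R : realType) p q (E K : 'M[R]_(p, q)) (s0 : R) :
  @derive1 R R^o
    (fun s => 2^-1 * \sum_(a < p) \sum_(b < q) ((E + (s - s0) *: K) a b) ^+ 2) s0
  = \sum_(a < p) \sum_(b < q) E a b * K a b.
Proof.
pose P := \sum_(a < p) \sum_(b < q)
  (2^-1)%:P * ((E a b - s0 * K a b)%:P + (K a b)%:P * 'X) ^+ 2.
have -> : (fun s => 2^-1 * \sum_(a < p) \sum_(b < q) ((E + (s - s0) *: K) a b) ^+ 2)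
    = horner P.
  apply/funext => s; rewrite /P horner_sum mulr_sumr; apply: eq_bigr => a _.
  rewrite horner_sum mulr_sumr; apply: eq_bigr => b _.
  by rewrite !mxE !(hornerM, hornerD, hornerC, hornerX, horner_exp); ring.
rewrite -derivE /P linear_sum horner_sum; apply: eq_bigr => a _.
rewrite linear_sum horner_sum; apply: eq_bigr => b _.
by rewrite deriv_half_sqr_affine; ring.
Qed.

Lemma mul_delta_entry (R : comNzRingType) p q r s (P : 'M[R]_(p, q))
    (Q : 'M[R]_(r, s)) i j a b :
  (P *m delta_mx i j *m Q) a b = P a i * Q j b.
Proof.
rewrite -(mul_delta_mx (0 : 'I_1)) mulmxA -colE -mulmxA -rowE.
by rewrite mxE big_ord1 !mxE.
Qed.

Lemma gradW_formula (R : realType) (d m dy n L : nat) (X : 'M[R]_(d, n))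
    (Y : 'M[R]_(dy, n)) (A : Wts R d m dy L) l :
  (1 <= l <= L)%N ->
  gradW X Y A l = cnorm R m dy L *:
    ((postW A l)^T *m (outU A X - Y) *m (preW A l.-1 *m X)^T).
Proof.
move=> lL; apply/matrixP => i j; rewrite mxE [RHS]mxE.
set P := postW A l; set Q := preW A l.-1 *m X; set c := cnorm R m dy L.
set K := c *: (P *m delta_mx i j *m Q).
(* Along the coordinate line through A l i j the residual moves affinely. *)
have line_residual s :
    outU (updW A (\matrix_(a, b) if (a == i) && (b == j) then s else A l a b)) X - Y
    = (outU A X - Y) + (s - A l i j) *: K.
  have -> : (\matrix_(a, b) if (a == i) && (b == j) then s else A l a b)
      = A l + (s - A l i j) *: delta_mx i j.
    apply/matrixP => a b; rewrite !mxE.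
    by case: (a =P i) => [->|_]; case: (b =P j) => [->|_] /=; ring.
  rewrite /outU !postW0 endW_updW // -(layer_factor A lL) /K /Q.
  rewrite mulmxDr !mulmxDl -!mulmxA scalerDr addrAC; congr (_ - _ + _).
  by rewrite -scalemxAl -scalemxAr !scalerA mulrC.
have K_entry a b : K a b = c * (P a i * Q j b) by rewrite mxE mul_delta_entry.
under eq_fun do rewrite /loss line_residual.
rewrite derive1_half_sqnorm mxE mulr_sumr exchange_big /=; apply: eq_bigr => b _.
rewrite !mxE mulr_suml mulr_sumr; apply: eq_bigr => a _.
by rewrite K_entry !mxE; ring.
Qed.

Section Vectorisation.
Variable R : realType.

Lemma vecc_add p q (A B : 'M[R]_(p, q)) : vecc (A + B) = vecc A + vecc B.
Proof. by apply/matrixP => k z; rewrite !mxE. Qed.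

Lemma vecc_scale p q a (A : 'M[R]_(p, q)) : vecc (a *: A) = a *: vecc A.
Proof. by apply/matrixP => k z; rewrite !mxE. Qed.

Lemma vecc_sum p q (I : Type) (r : seq I) (P : pred I) (F : I -> 'M[R]_(p, q)) :
  vecc (\sum_(i <- r | P i) F i) = \sum_(i <- r | P i) vecc (F i).
Proof.
apply: (big_morph (@vecc R p q) (@vecc_add p q)).
by apply/matrixP => k z; rewrite !mxE.
Qed.

Lemma vecc_mul3 p r s q (A : 'M[R]_(p, r)) (B : 'M[R]_(r, s)) (C : 'M[R]_(s, q)) :
  vecc (A *m B *m C) = kron C^T A *m vecc B.
Proof.
apply/matrixP => k z; case: (mxtens_indexP k) => j i.
rewrite /kron !mxE mxtens_indexK /=.
transitivity (\sum_(y < s) \sum_(x < r) C^T j y * A i x * B x y).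
  apply: eq_bigr => y _; rewrite !mxE mulr_suml; apply: eq_bigr => x _; ring.
rewrite pair_big; symmetry; rewrite (reindex (@mxtens_index s r)) /=; last first.
  by exists (@mxtens_unindex s r) => kk; rewrite (mxtens_indexK, mxtens_unindexK).
by apply: eq_bigr => -[y x] _; rewrite tensmxE !mxE mxtens_indexK.
Qed.

Lemma kron_gram_vecc k p q (Z : 'M[R]_(k, q)) (A : 'M[R]_(p, p)) (B : 'M[R]_(p, q)) :
  kron (Z^T *m Z) A *m vecc B = vecc (A *m B *m (Z^T *m Z)).
Proof. by rewrite vecc_mul3 trmx_mul trmxK. Qed.

Lemma psd_gram k N (G : 'M[R]_(k, N)) : psd (G^T *m G).
Proof.
split; first by rewrite trmx_mul trmxK.
move=> v; rewrite mulmxA -trmx_mul -mulmxA mxE.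
by apply: sumr_ge0 => i _; rewrite mxE -expr2 sqr_ge0.
Qed.

(* A Kronecker product of Gram matrices is itself a Gram matrix. *)
Lemma psd_kron_gram k k' p q (Q : 'M[R]_(k, p)) (P : 'M[R]_(q, k')) :
  psd (kron (Q^T *m Q) (P *m P^T)).
Proof.
have -> : kron (Q^T *m Q) (P *m P^T) = (kron Q P^T)^T *m kron Q P^T.
  by rewrite /kron trmx_tens trmxK tensmx_mul.
exact: psd_gram.
Qed.

Lemma psd_scale_sum_kron_gram (k k' : nat -> nat) p q (a : R) (r : seq nat)
    (P : pred nat) (Qs : forall l, 'M[R]_(k l, p)) (Ps : forall l, 'M[R]_(q, k' l)) :
  0 <= a ->
  psd (a *: \sum_(l <- r | P l) kron ((Qs l)^T *m Qs l) (Ps l *m (Ps l)^T)).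
Proof.
move=> a_ge0; elim/big_ind: _ => [|A B [symA posA] [symB posB]|l _].
- by split=> [|v]; rewrite ?scaler0 ?trmx0 // mulmx0 mul0mx mxE.
- rewrite scalerDr; split; first by rewrite linearD /= symA symB.
  by move=> v; rewrite mulmxDr mulmxDl mxE addr_ge0.
- have [symG posG] := psd_kron_gram (Qs l) (Ps l).
  split; first by rewrite linearZ /= symG.
  by move=> v; rewrite -scalemxAr -scalemxAl mxE mulr_ge0.
Qed.
End Vectorisation.

Lemma kernel_residual (R : realType) (d m dy n L : nat) (X : 'M[R]_(d, n))
    (Y : 'M[R]_(dy, n)) (A : Wts R d m dy L) :
  (((m ^ (L - 1) * dy)%N%:R)^-1 *:
      \sum_(1 <= l < L.+1)
        kron ((preW A l.-1 *m X)^T *m (preW A l.-1 *m X))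
             (postW A l *m (postW A l)^T))
    *m vecc (outU A X - Y)
  = cnorm R m dy L *:
      vecc ((\sum_(1 <= l < L.+1) postW A l *m gradW X Y A l *m preW A l.-1) *m X).
Proof.
have c2 : cnorm R m dy L * cnorm R m dy L = ((m ^ (L - 1) * dy)%N%:R)^-1.
  by rewrite /cnorm -invfM -expr2 sqr_sqrtr ?ler0n.
rewrite -scalemxAl !mulmx_suml vecc_sum -c2 -scalerA; congr (_ *: _).
rewrite scaler_sumr; apply: eq_big_nat => l lL.
rewrite gradW_formula // -scalemxAr -!scalemxAl vecc_scale kron_gram_vecc.
by rewrite !mulmxA.
Qed.

Section HeavyBall.
Variables (R : realType) (d m dy n L : nat) (X : 'M[R]_(d, n)) (Y : 'M[R]_(dy, n)).
Variables (eta beta : R) (W : nat -> Wts R d m dy L).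
Hypothesis heavy_ball : forall t l, (1 <= l <= L)%N ->
  W t.+1 l = W t l - eta *: gradW X Y (W t) l + beta *: (W t l - W t.-1 l).

Definition momentum (t l : nat) : 'M[R]_(dimf d m dy L l, dimf d m dy L l.-1) :=
  \sum_(s < t.+1) beta ^+ (t - s) *: gradW X Y (W s) l.

Lemma momentumS t l :
  momentum t.+1 l = gradW X Y (W t.+1) l + beta *: momentum t l.
Proof.
rewrite /momentum big_ord_recr /= subnn expr0 scale1r addrC; congr (_ + _).
rewrite scaler_sumr; apply: eq_bigr => s _.
by rewrite scalerA -exprS subSn // -ltnS.
Qed.

Lemma momentum_step t l : (1 <= l <= L)%N -> W t.+1 l = W t l - eta *: momentum t l.
Proof.
move=> lL; elim: t => [|t IH].
  by rewrite heavy_ball // subrr scaler0 addr0 /momentum big_ord1 expr0 scale1r.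
rewrite heavy_ball // momentumS /= IH.
by apply/matrixP => a b; rewrite !mxE; ring.
Qed.

Lemma momentum_split t l : (1 <= l <= L)%N ->
  eta *: momentum t l = eta *: gradW X Y (W t) l + beta *: (W t.-1 l - W t l).
Proof.
move=> lL; case: t => [|t].
  by rewrite /momentum big_ord1 expr0 scale1r subrr scaler0 addr0.
rewrite momentumS /= momentum_step //.
by apply/matrixP => a b; rewrite !mxE; ring.
Qed.

Lemma Phi_decomposition t :
  postW ((fun l => W t l - eta *: momentum t l) : Wts R d m dy L) 0 - postW (W t) 0
  + eta *: \sum_(1 <= l < L.+1) postW (W t) l *m momentum t l *m preW (W t) l.-1
  = endW (W t.+1) - endW (W t)
    + (eta *: \sum_(1 <= l < L.+1) postW (W t) l *m gradW X Y (W t) l *m preW (W t) l.-1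
       + beta *: \sum_(1 <= l < L.+1) postW (W t) l *m W t.-1 l *m preW (W t) l.-1
       - (beta * L%:R) *: endW (W t)).
Proof.
rewrite !postW0 (@endW_ext _ _ _ _ _ _ (W t.+1)) => [|j jL]; last by rewrite momentum_step.
congr (_ + _); rewrite -scalerA -sum_layer_factor !scaler_sumr -big_split -sumrB /=.
apply: eq_big_nat => l lL.
rewrite [in LHS]scalemxAl [in LHS]scalemxAr momentum_split //.
by rewrite scalerBr mulmxDr mulmxBr mulmxDl mulmxBl -!scalemxAr -!scalemxAl addrA.
Qed.
End HeavyBall.

(* Once H_t xi_t is known, the recursion for the residuals is a linear identity
   in the end-to-end outputs F_{t+1}, F_t, F_{t-1} (scaled by c), the gradient
   part S_g and the previous-weight part S_W. *)
Lemma residual_recursion_identity (R : realType) p q (c eta beta Lr : R)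
    (Y F1 F0 Fm Sg SW : 'M[R]_(p, q)) (H0 Ht : 'M[R]_(q * p)) :
  Ht *m vecc (c *: F0 - Y) = c *: vecc Sg ->
  vecc (c *: F1 - Y) =
    ((1 + beta)%:M - eta *: H0) *m vecc (c *: F0 - Y) + (- beta%:M) *m vecc (c *: Fm - Y)
    + (c *: vecc (F1 - F0 + (eta *: Sg + beta *: SW - (beta * Lr) *: F0))
       + c *: vecc ((Lr - 1) * beta *: F0 + beta *: Fm - beta *: SW)
       + eta *: ((H0 - Ht) *m vecc (c *: F0 - Y))).
Proof.
move=> HtE; rewrite !mulmxBl HtE mulNmx !mul_scalar_mx -scalemxAl.
move: (H0 *m _) => H0xi.
by apply/matrixP => k z; rewrite !mxE; ring.
Qed.

Theorem lemma4 (R : realType) (d m dy n L : nat) (hL : (0 < L)%N)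
  (X : 'M[R]_(d, n)) (Y : 'M[R]_(dy, n)) (eta beta : R)
  (W : nat -> Wts R d m dy L)
  (hW : forall (t l : nat), (1 <= l <= L)%N ->
     W t.+1 l = W t l - eta *: gradW X Y (W t) l + beta *: (W t l - W t.-1 l)) :
  let M (t l : nat) := \sum_(s < t.+1) beta ^+ (t - s) *: gradW X Y (W s) l in
  let c := cnorm R m dy L in
  let xi (t : nat) := vecc (outU (W t) X - Y) in
  let H (t : nat) : 'M[R]_(n * dy) :=
    ((m ^ (L - 1) * dy)%N%:R)^-1 *:
      \sum_(1 <= l < L.+1)
        kron ((preW (W t) l.-1 *m X)^T *m (preW (W t) l.-1 *m X))
             (postW (W t) l *m (postW (W t) l)^T) in
  let Phi (t : nat) : 'M[R]_(dy, d) :=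
    postW ((fun l => W t l - eta *: M t l) : Wts R d m dy L) 0
    - postW (W t) 0
    + eta *: \sum_(1 <= l < L.+1) (postW (W t) l *m M t l *m preW (W t) l.-1) in
  let phi (t : nat) := c *: vecc (Phi t *m X) in
  let psi (t : nat) :=
    c *: vecc ((L - 1)%N%:R * beta *: (postW (W t) 0 *m X)
               + beta *: (postW (W t.-1) 0 *m X)
               - beta *: \sum_(1 <= l < L.+1)
                    (postW (W t) l *m W t.-1 l *m preW (W t) l.-1 *m X)) in
  let iota (t : nat) := eta *: ((H 0%N - H t) *m xi t) in
  (forall t : nat, psd (H t)) /\
  (forall t : nat,
     col_mx (xi t.+1) (xi t) =
       block_mx ((1 + beta)%:M - eta *: H 0%N) (- beta%:M) 1%:M 0
         *m col_mx (xi t) (xi t.-1)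
       + col_mx (phi t + psi t + iota t) 0).
Proof.
move=> M c xi H Phi phi psi iota; split.
  by move=> t; apply: psd_scale_sum_kron_gram; rewrite invr_ge0 ler0n.
move=> t; rewrite mul_block_col add_col_mx mul1mx mul0mx !addr0; congr col_mx.
set Sg := \sum_(1 <= l < L.+1) postW (W t) l *m gradW X Y (W t) l *m preW (W t) l.-1.
set SW := \sum_(1 <= l < L.+1) postW (W t) l *m W t.-1 l *m preW (W t) l.-1.
have xiE s : xi s = vecc (c *: (endW (W s) *m X) - Y) by rewrite /xi /outU postW0.
have phiE : phi t = c *: vecc (endW (W t.+1) *m X - endW (W t) *m X
    + (eta *: (Sg *m X) + beta *: (SW *m X) - (beta * L%:R) *: (endW (W t) *m X))).
  by rewrite /phi /Phi (Phi_decomposition hW) !mulmxDl !mulNmx -!scalemxAl.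
have psiE : psi t = c *: vecc ((L%:R - 1) * beta *: (endW (W t) *m X)
    + beta *: (endW (W t.-1) *m X) - beta *: (SW *m X)).
  by rewrite /psi !postW0 natrB // /SW mulmx_suml.
have HxiE : H t *m xi t = c *: vecc (Sg *m X) by exact: kernel_residual.
rewrite phiE psiE /iota !xiE; rewrite xiE in HxiE.
exact: residual_recursion_identity.
Qed.
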